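(* Let $G,H\in\mathcal{C}_{n,m}$ and suppose $W_G(x,y)-W_H(x,y)=(1-xy)P(x,y)$ for some nonnegative polynomial $P$. Then $N_i^{(k)}(H)\le N_i^{(k)}(G)$ for every $i\in\{0,1,\ldots,m\}$ and every $k\in\{1,2,\ldots,n\}$.
   Context: $\mathcal{C}_{n,m}$ denotes the set of all connected simple graphs on $n$ vertices and $m$ edges. For a graph $G$ with vertex set $V$, $\kappa(G)$ is its number of connected components, $r(G)=|V|-\kappa(G)$, $c(G)=|E(G)|-|V|+\kappa(G)$. $\mathcal{S}(G)$ is the set of all spanning subgraphs of $G$. The Whitney polynomial is $W_G(x,y)=\sum_{H\in\mathcal{S}(G)}x^{r(G)-r(H)}y^{c(H)}$. A bivariate polynomial is nonnegative if all its coefficients (in the monomial basis $x^iy^j$) are nonnegative real numbers. For $i\in\{0,\ldots,m\}$ and $k\in\{1,\ldots,n\}$, $N_i^{(k)}(G)$ is the number of spanning subgraphs of $G$ having exactly $i$ edges and at most $k$ connected components. *)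

From mathcomp Require Import all_boot all_order all_algebra.
Set Implicit Arguments. Unset Strict Implicit. Unset Printing Implicit Defensive.
Import GRing.Theory Num.Theory.

(* A simple graph on vertex set 'I_n is given by its edge set: a set of
   2-element subsets of 'I_n.  A spanning subgraph is a subset of the edge set. *)

Definition simple_edges n (E : {set {set 'I_n}}) : bool :=
  [forall e in E, #|e| == 2].

Definition adj n (S : {set {set 'I_n}}) : rel 'I_n :=
  fun x y => [set x; y] \in S.

Definition kappa n (S : {set {set 'I_n}}) : nat :=
  n_comp (connect (adj S)) 'I_n.

(* rank r = |V| - kappa ;  nullity c = |E| - |V| + kappa (always >= 0) *)
Definition rk n (S : {set {set 'I_n}}) : nat := n - kappa S.
Definition nul n (S : {set {set 'I_n}}) : nat := #|S| + kappa S - n.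

Definition inC n m (E : {set {set 'I_n}}) : Prop :=
  simple_edges E /\ #|E| = m /\ kappa E = 1%N.

(* Whitney polynomial in {poly {poly R}}: outer variable x, inner variable y.
   The monomial x^a y^b is (('X^b)%:P) * 'X^a. *)
Definition whitney (R : nzRingType) n (E : {set {set 'I_n}}) : {poly {poly R}} :=
  (\sum_(S in powerset E) (('X^(nul S) : {poly R})%:P * 'X^(rk E - rk S)))%R.

Definition nonneg_poly2 (R : numDomainType) (P : {poly {poly R}}) : Prop :=
  forall i j : nat, (0 <= (P`_i)`_j)%R.

Definition Nik n (E : {set {set 'I_n}}) (i k : nat) : nat :=
  #|[set S in powerset E | (#|S| == i) && (kappa S <= k)]|.

(* Apply to both sides of W_G - W_H = (1 - xy) P the linear functional L that
   sums the coefficients of x^a y^b over a < k on the diagonal b - a = i + 1 - n.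
   A spanning subgraph S of a connected graph contributes the monomial
   x^(kappa S - 1) y^(|S| + kappa S - n), which lies on that diagonal exactly
   when |S| = i, and below a = k exactly when kappa S <= k; hence
   L(W_G) - L(W_H) = N_i^(k)(G) - N_i^(k)(H).  Multiplication by xy moves one
   step along the diagonal, so L((1 - xy) P) telescopes to a single coefficient
   of P, which is nonnegative.  The graph theory needed is only
   1 <= kappa S <= n and n <= |S| + kappa S, the latter because adding an edge
   merges at most two components. *)

From mathcomp Require Import all_boot all_order all_algebra zify.
Import GRing.Theory Num.Theory.

Set Implicit Arguments.
Unset Strict Implicit.
Unset Printing Implicit Defensive.

Section ComponentCount.
Variable T : finType.
Implicit Types (S : {set {set T}}) (u v x y : T).

Definition edge_rel S : rel T := fun x y => [set x; y] \in S.

Definition ncomp S : nat := n_comp (connect (edge_rel S)) T.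

Lemma edge_rel_sym S : symmetric (edge_rel S).
Proof. by move=> x y; rewrite /edge_rel setUC. Qed.

Lemma connect_edge_sym S : connect_sym (edge_rel S).
Proof. exact/sym_connect_sym/edge_rel_sym. Qed.

Lemma ncompE S : ncomp S = #|roots (edge_rel S)|.
Proof.
rewrite /ncomp (@eq_n_comp _ _ (edge_rel S)); last first.
  by move=> x y; apply/idP/idP; [apply: connect_sub | apply: connect1].
by apply: eq_card => x; rewrite !inE andbT.
Qed.

Lemma eq_ncomp S S' : edge_rel S =2 edge_rel S' -> ncomp S = ncomp S'.
Proof. by move=> eqSS'; rewrite !ncompE; apply/eq_card/eq_roots. Qed.

Lemma ncomp_set0 : ncomp set0 = #|T|.
Proof.
rewrite ncompE; apply: eq_card => x; rewrite !inE /roots /=.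
have /connectP[[|z p] /= + ->] := connect_root (edge_rel set0) x; first by rewrite eqxx.
by rewrite {1}/edge_rel inE.
Qed.

Lemma ncomp_gt0 S : 0 < #|T| -> 0 < ncomp S.
Proof.
case/card_gt0P=> x _; rewrite ncompE; apply/card_gt0P.
by exists (fingraph.root (edge_rel S) x); rewrite inE; apply/roots_root/connect_edge_sym.
Qed.

Lemma ncomp_le_card S : ncomp S <= #|T|.
Proof. by rewrite ncompE max_card. Qed.

Section AddEdge.
Variables (S : {set {set T}}) (u v : T).
Local Notation c := (connect (edge_rel S)).
Local Notation near x := (c x u || c x v).

Lemma connect_setU_edge x y : connect (edge_rel ([set u; v] |: S)) x y ->
  c x y || near x && near y.
Proof.
have near_c z w : c z w -> near w -> near z.
  by move=> czw /orP[] cw; rewrite (connect_trans czw cw) ?orbT.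
have near_uv z : z \in [set u; v] -> near z.
  by rewrite !inE => /orP[] /eqP->; rewrite connect0 ?orbT.
case/connectP=> p + -> {y}; elim: p x => [|z p IHp] x /=; first by rewrite connect0.
case/andP=> + /IHp; rewrite {1}/edge_rel in_setU1 => /orP[/eqP exz | xz].
  have nx : near x by apply: near_uv; rewrite -exz !inE eqxx.
  have nz : near z by apply: near_uv; rewrite -exz !inE eqxx orbT.
  case/orP=> [czl | /andP[_ ->]]; last by rewrite nx orbT.
  have nl : near (last z p) by apply: (near_c _ z); rewrite // connect_edge_sym.
  by rewrite nx nl orbT.
have cxz : c x z by apply: connect1.
case/orP=> [czl | /andP[nz ->]]; first by rewrite (connect_trans cxz czl).
by rewrite (near_c _ _ cxz nz) orbT.
Qed.

Lemma ncomp_setU_edge : ncomp S <= ncomp ([set u; v] |: S) + 1.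
Proof.
set S' := [set u; v] |: S; rewrite !ncompE.
have roots_connect_eq r1 r2 : roots (edge_rel S) r1 -> roots (edge_rel S) r2 ->
    c r1 r2 -> r1 = r2.
  move=> /eqP r1E /eqP r2E; rewrite -(root_connect (@connect_edge_sym S)).
  by rewrite r1E r2E => /eqP.
set A := [set r in roots (edge_rel S)] :\ fingraph.root (edge_rel S) v.
have cardA : #|roots (edge_rel S)| <= #|A| + 1.
  by rewrite -cardsE (cardsD1 (fingraph.root (edge_rel S) v)) addnC leq_add2l leq_b1.
have A_u r : r \in A -> near r -> c r u.
  rewrite !inE => /andP[rv /eqP rE] /orP[] // crv; case/eqP: rv.
  by apply/eqP; rewrite -{1}rE root_connect //; apply: connect_edge_sym.
have inj : {in A &, injective (fingraph.root (edge_rel S'))}.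
  move=> r1 r2 A1 A2 /eqP; rewrite root_connect; last exact: connect_edge_sym.
  have R1 : roots (edge_rel S) r1 by move: A1; rewrite !inE => /andP[].
  have R2 : roots (edge_rel S) r2 by move: A2; rewrite !inE => /andP[].
  case/connect_setU_edge/orP=> [|/andP[n1 n2]]; first exact: roots_connect_eq.
  apply: roots_connect_eq => //; apply: connect_trans (A_u _ A1 n1) _.
  by rewrite connect_edge_sym A_u.
have : fingraph.root (edge_rel S') @: A \subset [set r in roots (edge_rel S')].
  by apply/subsetP => _ /imsetP[r _ ->]; rewrite inE; apply/roots_root/connect_edge_sym.
move/subset_leq_card; rewrite card_in_imset // cardsE => leA.
exact: leq_trans cardA (leq_add leA (leqnn 1)).
Qed.

End AddEdge.

Lemma card_le_edges_ncomp S : #|T| <= #|S| + ncomp S.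
Proof.
have [m le] := ubnP #|S|; elim: m S le => // m IHm S.
have [-> _|[e eS]] := set_0Vmem S; first by rewrite ncomp_set0 cards0.
rewrite (cardsD1 e S) eS ltnS => /IHm le_De.
suff : ncomp (S :\ e) <= ncomp S + 1 by lia.
have [/existsP[u /existsP[w /eqP eE]] | not_edge] :=
  boolP [exists u, exists w, e == [set u; w]].
  have SE : S = [set u; w] |: (S :\ e) by rewrite -eE setD1K.
  by rewrite {2}SE ncomp_setU_edge.
(* A set that is empty or has at least three elements is invisible to
   [edge_rel], so no simplicity hypothesis on [S] is needed. *)
rewrite (@eq_ncomp (S :\ e) S) ?leq_addr // => x y.
rewrite /edge_rel in_setD1 andb_idl // => _; apply: contraNneq not_edge => <-.
by apply/existsP; exists x; apply/existsP; exists y.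
Qed.

End ComponentCount.

Section DiagonalCoefficientSums.
Variable R : nzRingType.
Local Open Scope ring_scope.
Implicit Types (P Q : {poly {poly R}}) (p q k : nat).

Definition diag_coef_sum p q k Q : R :=
  \sum_(0 <= a < k) (if (q <= a + p)%N then Q`_a`_(a + p - q) else 0).

Lemma diag_coef_sumB p q k Q1 Q2 :
  diag_coef_sum p q k (Q1 - Q2) = diag_coef_sum p q k Q1 - diag_coef_sum p q k Q2.
Proof.
rewrite -sumrB; apply: eq_bigr => a _.
by case: ifP; rewrite ?subr0 // => _; rewrite !coefB.
Qed.

Lemma diag_coef_sum_sum p q k (I : finType) (A : {pred I}) (F : I -> {poly {poly R}}) :
  diag_coef_sum p q k (\sum_(i in A) F i) = \sum_(i in A) diag_coef_sum p q k (F i).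
Proof.
rewrite exchange_big; apply: eq_bigr => a _.
by case: ifP => _; [rewrite !coef_sum | rewrite big1].
Qed.

Lemma diag_coef_sum_monomial p q k a b :
  diag_coef_sum p q k (('X^b)%:P * 'X^a) = ((a < k)%N && (b + q == a + p)%N)%:R.
Proof.
have term a' : (if (q <= a' + p)%N then (('X^b)%:P * 'X^a)`_a'`_(a' + p - q) else 0)
    = if a' == a then ((b + q == a' + p)%N)%:R else 0 :> R.
  rewrite coefCM coefXn; case: eqP => [->|_]; last by rewrite mulr0 coef0 if_same.
  rewrite mulr1 coefXn; case: leqP => h; first by congr (_%:R); apply/eqP/eqP; lia.
  by rewrite (_ : (b + q == a + p)%N = false) //; apply/eqP; lia.
rewrite /diag_coef_sum (eq_bigr _ (fun a' _ => term a')) -big_mkcond big_nat1_eq.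
by case: ltnP.
Qed.

Lemma coefXYM P a b :
  ('X%:P * 'X * P)`_a`_b = if (a == 0)%N || (b == 0)%N then 0 else P`_a.-1`_b.-1.
Proof.
rewrite -mulrA coefCM coefXM; case: (a == 0)%N => /=; first by rewrite mulr0 coef0.
by rewrite coefXM.
Qed.

Lemma diag_coef_sum_XY_telescope p q k P :
  diag_coef_sum p q k.+1 ((1 - 'X%:P * 'X) * P) =
    if (q <= k + p)%N then P`_k`_(k + p - q) else 0.
Proof.
pose g a := if a is a'.+1 then (if (q <= a' + p)%N then P`_a'`_(a' + p - q) else 0) else 0.
rewrite /diag_coef_sum (@telescope_sumr_eq _ 0 k.+1 g) // ?subr0 // => a _.
rewrite mulrBl mul1r /g; case: a => [|a] /=.
  by rewrite subr0; case: ifP => // _; rewrite !coefB coefXYM eqxx subr0.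
case: (leqP q (a.+1 + p)) => [le_q_Sa | lt_Sa_q]; last first.
  by rewrite ifF ?subrr //; apply/negbTE; rewrite -ltnNge; lia.
rewrite !coefB coefXYM /=; case: (leqP q (a + p)) => [le_q_a | lt_a_q].
  by rewrite ifF; [congr (_ - P`_a`__); lia | apply/eqP; lia].
by rewrite ifT ?subr0 //; apply/eqP; lia.
Qed.
End DiagonalCoefficientSums.

Lemma sumr_indicator_card (R : nzSemiRingType) (T : finType) (A : {pred T})
    (b : pred T) :
  (\sum_(x in A) (b x)%:R = #|[set x in A | b x]|%:R :> R)%R.
Proof.
rewrite -sum1dep_card natr_sum big_mkcondr /=.
by apply: eq_bigr => x _; case: (b x).
Qed.

Section WhitneyDiagonal.
Variable R : nzRingType.
Variable n : nat.
Implicit Types (E S : {set {set 'I_n}}).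

Lemma diag_coef_sum_whitney p q k E : diag_coef_sum p q k (whitney R E) =
  (#|[set S in powerset E | ((rk E - rk S < k) && (nul S + q == rk E - rk S + p))%N]|%:R)%R.
Proof.
rewrite diag_coef_sum_sum.
under eq_bigr do rewrite diag_coef_sum_monomial.
exact: sumr_indicator_card.
Qed.

(* [kappa S] is [ncomp S] for [T := 'I_n], by conversion. *)
Lemma kappa_bounds S : 0 < n -> [/\ 0 < kappa S, kappa S <= n & n <= #|S| + kappa S].
Proof.
move=> n_gt0; have := card_le_edges_ncomp S; rewrite card_ord => le_n.
split=> //; first by apply: ncomp_gt0; rewrite card_ord.
by rewrite -{2}(card_ord n); apply: ncomp_le_card.
Qed.

Lemma diag_coef_sum_whitney_connected i k E : kappa E = 1 ->
  diag_coef_sum i.+1 n k (whitney R E) = (Nik E i k)%:R%R.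
Proof.
move=> kE; have n_gt0 : 0 < n by rewrite -kE -{2}(card_ord n) ncomp_le_card.
rewrite diag_coef_sum_whitney /Nik; congr (_%:R)%R; apply: eq_card => S.
rewrite !inE; congr (_ && _).
have [k_gt0 k_le_n n_le] := kappa_bounds S n_gt0.
rewrite /rk /nul kE; apply/andP/andP => -[h1 /eqP h2]; split; try apply/eqP; lia.
Qed.

End WhitneyDiagonal.

Theorem mainTheorem3 (R : realFieldType) (n m : nat) (G H : {set {set 'I_n}}) :
  inC m G -> inC m H ->
  (exists P : {poly {poly R}}, nonneg_poly2 P /\
     (whitney R G - whitney R H = (1 - ('X%:P * 'X)) * P)%R) ->
  forall i k : nat, (i <= m)%N -> (1 <= k <= n)%N -> (Nik H i k <= Nik G i k)%N.
Proof.
move=> [_ [_ kG]] [_ [_ kH]] [P [P_ge0 WGH]] i [|k] _ // _.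
rewrite -(ler_nat R) -subr_ge0.
rewrite -(diag_coef_sum_whitney_connected R i _ kG) -(diag_coef_sum_whitney_connected R i _ kH).
by rewrite -diag_coef_sumB WGH diag_coef_sum_XY_telescope; case: ifP.
Qed.
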